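(* Let $V\simeq\mathbb{R}^d$ be a $d$-dimensional real vector space with dual $V^*$, let $\mathcal{X}\subseteq V$ span $V$, and let $\mathcal{Y}\subseteq\mathbb{R}$. Let $\mathcal{G}$ be a compact group with normalized Haar measure $\lambda$ admitting a linear representation $\rho:\mathcal{G}\to GL(V)$, acting on $\mathcal{X}$ via $\rho$, with dual representation $\rho^*_g=\rho_{g^{-1}}^{\top}$. Let $\mathcal{P}$ be a distribution on $\mathcal{X}\times\mathcal{Y}$ invariant under this action of $\mathcal{G}$, and suppose $\mathbb{E}[y\mid \mathbf{x}]=\langle\mathbf{w}^*,\mathbf{x}\rangle$ for some unique $\mathbf{w}^*$. Let $\ell(\mathbf{w})=\mathbb{E}_{(\mathbf{x},y)\sim\mathcal{P}}[(\langle\mathbf{w},\mathbf{x}\rangle-y)^2]$. Then the (global) minimizer $\mathbf{w}^*$ of $\ell$ satisfies $\rho^*_g\mathbf{w}^*=\mathbf{w}^*$ for $\lambda$-almost all $g\in\mathcal{G}$. In particular, the function $f(\mathbf{x})=\langle\mathbf{w}^*,\mathbf{x}\rangle$ is $\mathcal{G}$-invariant.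
   Context: $\mathcal{P}$ invariant means $(\rho_g\mathbf{x},y)$ has the same distribution as $(\mathbf{x},y)$ for all $g\in\mathcal{G}$. A function $f$ is $\mathcal{G}$-invariant if $f(\rho_g\mathbf{x})=f(\mathbf{x})$ for all $g$ and $\mathbf{x}$. *)

From HB Require Import structures.
From mathcomp Require Import all_boot all_order all_algebra.
From mathcomp Require Import all_classical all_reals all_analysis.
Set Implicit Arguments. Unset Strict Implicit. Unset Printing Implicit Defensive.
Import Order.TTheory GRing.Theory Num.Theory.
Import numFieldNormedType.Exports.
Local Open Scope classical_set_scope.
Local Open Scope ring_scope.

Definition borel (T : topologicalType) : set (set T) := <<s [set: T], open >>.

Definition compact_group (G : topologicalType) (mul : G -> G -> G)
    (inv : G -> G) (e : G) : Prop :=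
  [/\ (forall a b c, mul a (mul b c) = mul (mul a b) c),
      (forall a, mul e a = a),
      (forall a, mul (inv a) a = e),
      continuous (fun p : G * G => mul p.1 p.2) &
      continuous inv] /\
  hausdorff_space G /\ compact [set: G].

(* A (continuous) linear representation rho : G -> GL(V), V = R^d realised as
   column vectors 'cV[R]_d, rho g acting by v |-> rho g *m v. *)
Definition representation (R : realType) (d : nat) (G : topologicalType)
    (mul : G -> G -> G) (e : G) (rho : G -> 'M[R]_d) : Prop :=
  [/\ (forall g, rho g \in unitmx),
      (forall g h, rho (mul g h) = rho g *m rho h),
      rho e = 1%:M &
      continuous rho].

Definition dual_rep (R : realType) (d : nat) (G : Type) (inv : G -> G)
    (rho : G -> 'M[R]_d) (g : G) : 'M[R]_d := (rho (inv g))^T.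

Definition dualpair (R : realType) (d : nat) (w x : 'cV[R]_d) : R :=
  (w^T *m x) 0 0.

Definition spans (R : realType) (d : nat) (X : set 'cV[R]_d) : Prop :=
  forall v : 'cV[R]_d, exists (n : nat) (c : 'I_n -> R) (u : 'I_n -> 'cV[R]_d),
    (forall i, X (u i)) /\ v = \sum_(i < n) c i *: u i.

(* E[y | x] = <w, x>: the random variable <w, x> (which is sigma(x)-measurable)
   is integrable and has the same integral as y on every event of sigma(x),
   i.e. on every x^{-1}(A) with A a Borel subset of V. *)
Definition cond_exp_linear (dO : measure_display) (O : measurableType dO)
    (R : realType) (P : probability O R) (d : nat)
    (x : O -> 'cV[R]_d) (y : O -> R) (w : 'cV[R]_d) : Prop :=
  P.-integrable [set: O] (fun o => (dualpair w (x o))%:E) /\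
  forall A : set 'cV[R]_d, borel A ->
    (\int[P]_(o in x @^-1` A) (y o)%:E =
     \int[P]_(o in x @^-1` A) (dualpair w (x o))%:E)%E.

(* The hypothesis that (rho_g x, y) and (x, y) have the same law lets one move
   every integral of a function of (x, y) to the same integral of a function of
   (rho_g x, y).  Since <rho_g^T w, x> = <w, rho_g x>, this turns the defining
   property E[y | x] = <w*, x> into E[y | x] = <rho_g^T w*, x>, so uniqueness of
   w* forces rho_g^T w* = w* for every g, in particular for g^-1. *)
From HB Require Import structures.
From mathcomp Require Import all_boot all_order all_algebra.
From mathcomp Require Import all_classical all_reals all_analysis.
From mathcomp Require Import measurable_realfun.
Set Implicit Arguments.
Unset Strict Implicit.
Unset Printing Implicit Defensive.

Import Order.TTheory GRing.Theory Num.Theory.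
Import numFieldNormedType.Exports.
Local Open Scope classical_set_scope.
Local Open Scope ring_scope.

HB.instance Definition _ (T U : ptopologicalType) := Pointed.on (T * U)%type.

Section continuous_matrix.
Variable R : numFieldType.

Lemma continuous_mx (S : topologicalType) m n (f : S -> 'M[R]_(m, n)) :
  (forall i j, continuous (fun s => f s i j)) -> continuous f.
Proof.
move=> fij_cont s.
apply/(@cvg_mx_entourageP _ m n (f @ s) _ (f s)) => A entA.
apply: filter_forall => i; apply: filter_forall => j.
have /cvg_entourageP /(_ A entA) := fij_cont i j s; rewrite near_simpl.
by apply: filterS => t /= Aft; rewrite inE.
Qed.

Lemma continuous_mulmx m n p (N : 'M[R]_(m, n)) :
  continuous (fun v : 'M[R]_(n, p) => N *m v).
Proof.
apply: continuous_mx => i j; under eq_fun do rewrite mxE.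
apply: (continuous_big add_continuous) => k _ v.
apply: (@continuousM _ _ (fun=> N i k) (fun w : 'M[R]_(n, p) => w k j)).
  exact: cst_continuous.
exact: coord_continuous.
Qed.

End continuous_matrix.

Lemma continuous_fst (S U : topologicalType) : continuous (@fst S U).
Proof. by move=> p; exact: cvg_fst. Qed.

Lemma continuous_snd (S U : topologicalType) : continuous (@snd S U).
Proof. by move=> p; exact: cvg_snd. Qed.

Lemma continuous_comp_fst (S U W : topologicalType) (g : S -> W) :
  continuous g -> continuous (fun p : S * U => g p.1).
Proof.
move=> g_cont p.
by apply: continuous_comp; [exact: continuous_fst | exact: g_cont].
Qed.

Lemma dualpair_trmx (R : realType) d (M : 'M[R]_d) (w v : 'cV[R]_d) :
  dualpair (M^T *m w) v = dualpair w (M *m v).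
Proof. by rewrite /dualpair trmx_mul trmxK mulmxA. Qed.

Lemma continuous_dualpair (R : realType) d (w : 'cV[R]_d) :
  continuous (dualpair w).
Proof.
move=> v; apply: (@continuous_comp _ _ _ (mulmx w^T) (fun M => M 0 0)).
  exact: continuous_mulmx.
exact: coord_continuous.
Qed.

(* Its measurable sets are, up to conversion, the [borel] sets of [S]. *)
Definition borelType (S : ptopologicalType) := g_sigma_algebraType (@open S).

Lemma continuous_borel_measurable (S U : ptopologicalType) (f : S -> U) :
  continuous f ->
  measurable_fun [set: borelType S] (f : borelType S -> borelType U).
Proof.
move=> f_cont.
apply: (@measurability _ _ _ (borelType U) _ _ (@open U) erefl) => _ [B oB <-].
by apply: sub_sigma_algebra; rewrite setTI; exact: (proj1 (continuousP f)).
Qed.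

Lemma continuous_borel_measurableR (R : realType) (S : ptopologicalType)
    (f : S -> R) :
  continuous f -> measurable_fun [set: borelType S] (f : borelType S -> R).
Proof.
move=> f_cont.
refine (@measurability _ _ (borelType S) R setT f (@RGenOInfty.G R) _ _).
  exact: RGenOInfty.measurableE.
move=> _ [B [r ->] <-].
apply: sub_sigma_algebra; rewrite setTI.
by apply: (proj1 (continuousP f)) => //; exact: rray_open.
Qed.

Section equal_laws.
Local Open Scope ereal_scope.
Context d d' (O : measurableType d) (T : measurableType d') (R : realType)
  (P : {measure set O -> \bar R}) (z1 z2 : O -> T).
Hypotheses (mz1 : measurable_fun [set: O] z1) (mz2 : measurable_fun [set: O] z2)
  (law_z12 : forall C, measurable C -> P (z1 @^-1` C) = P (z2 @^-1` C)).

Lemma eq_law_ge0_integral (F : T -> \bar R) : measurable_fun [set: T] F ->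
  (forall t, 0 <= F t) -> \int[P]_o F (z1 o) = \int[P]_o F (z2 o).
Proof.
move=> mF F_ge0.
have := ge0_integral_pushforward mz1 P measurableT mF (fun t _ => F_ge0 t).
have := ge0_integral_pushforward mz2 P measurableT mF (fun t _ => F_ge0 t).
rewrite !preimage_setT => <- <-.
by apply: eq_measure_integral => A mA _; exact: law_z12.
Qed.

Lemma eq_law_integral (F : T -> \bar R) : measurable_fun [set: T] F ->
  \int[P]_o F (z1 o) = \int[P]_o F (z2 o).
Proof.
move=> mF; rewrite integralE [RHS]integralE.
rewrite -[fun o => F (z1 o)]/(F \o z1) -[fun o => F (z2 o)]/(F \o z2).
rewrite (funepos_comp F z1) (funepos_comp F z2).
rewrite (funeneg_comp F z1) (funeneg_comp F z2).
congr (_ - _).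
  exact: (@eq_law_ge0_integral F^\+ (measurable_funepos mF) (funepos_ge0 F)).
exact: (@eq_law_ge0_integral F^\- (measurable_funeneg mF) (funeneg_ge0 F)).
Qed.

Lemma eq_law_integrable (F : T -> \bar R) : measurable_fun [set: T] F ->
  P.-integrable [set: O] (F \o z2) -> P.-integrable [set: O] (F \o z1).
Proof.
move=> mF /integrableP[_ Fz2_fin]; apply/integrableP; split.
  exact: measurableT_comp.
rewrite (@eq_law_ge0_integral (fun t => `|F t|)) //.
exact: measurableT_comp.
Qed.

End equal_laws.

Section invariant_law.
Local Open Scope ereal_scope.
Context (R : realType) (d : nat) (dO : measure_display) (O : measurableType dO)
  (P : probability O R) (x : O -> 'cV[R]_d) (y : O -> R) (M : 'M[R]_d).
Hypotheses (M_unit : M \in unitmx)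
  (mxy : forall C : set ('cV[R]_d * R), borel C ->
     measurable ((fun o => (x o, y o)) @^-1` C))
  (law_Mxy : forall C : set ('cV[R]_d * R), borel C ->
     P ((fun o => (M *m x o, y o)) @^-1` C) =
     P ((fun o => (x o, y o)) @^-1` C)).

Let V := borelType ('cV[R]_d * R)%type.
Let xy : O -> V := fun o => (x o, y o).
Let Mxy : O -> V := fun o => (M *m x o, y o).

Let measurable_xy : measurable_fun [set: O] xy.
Proof. by move=> _ C mC; rewrite setTI; exact: mxy. Qed.

Let measurable_Mxy : measurable_fun [set: O] Mxy.
Proof.
have M1_cont : continuous (fun p : 'cV[R]_d * R => (M *m p.1, p.2)).
  move=> p; apply: (@cvg_pair _ _ _ (nbhs p) (nbhs (M *m p.1)) (nbhs p.2)).
    exact: continuous_comp_fst (continuous_mulmx (N := M)) p.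
  exact: continuous_snd.
exact: (measurableT_comp (continuous_borel_measurable M1_cont) measurable_xy).
Qed.

Lemma integral_invariant_law (S : set 'cV[R]_d) (f : V -> \bar R) :
  borel S -> measurable_fun [set: V] f ->
  \int[P]_(o in (fun o => M *m x o) @^-1` S) f (M *m x o, y o) =
  \int[P]_(o in x @^-1` S) f (x o, y o).
Proof.
move=> bS mf; rewrite [LHS]integral_mkcond [RHS]integral_mkcond.
have mS1 : measurable [set p : V | S p.1].
  have := continuous_borel_measurable (@continuous_fst 'cV[R]_d R).
  by move=> /(_ measurableT S bS); rewrite setTI.
have mfS1 := (measurable_restrictT f mS1).1 (measurable_funTS mf).
exact: (eq_law_integral measurable_Mxy measurable_xy law_Mxy mfS1).
Qed.

Lemma cond_exp_linear_trmx (w : 'cV[R]_d) :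
  cond_exp_linear P x y w -> cond_exp_linear P x y (M^T *m w).
Proof.
move=> [w_int w_cond].
have measurable_snd : measurable_fun [set: V] (fun p => (p.2)%:E).
  apply/measurable_EFinP.
  exact: (continuous_borel_measurableR (@continuous_snd 'cV[R]_d R)).
have measurable_pair_w : measurable_fun [set: V] (fun p => (dualpair w p.1)%:E).
  apply/measurable_EFinP.
  apply: continuous_borel_measurableR.
  exact: (continuous_comp_fst (U := R) (continuous_dualpair (w := w))).
split.
  have -> : (fun o => (dualpair (M^T *m w) (x o))%:E) =
            (fun p => (dualpair w p.1)%:E) \o Mxy.
    by apply/funext => o; rewrite /= dualpair_trmx.
  exact: (eq_law_integrable measurable_Mxy measurable_xy law_Mxy
    measurable_pair_w).
move=> A bA.
pose B := [set v | A (invmx M *m v)].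
have bB : borel B.
  have /continuous_borel_measurable := continuous_mulmx (p := 1) (N := invmx M).
  by move=> /(_ measurableT A bA); rewrite setTI.
have -> : x @^-1` A = (fun o => M *m x o) @^-1` B.
  by apply/funext => o; rewrite /B /preimage /= mulKmx.
rewrite (integral_invariant_law bB measurable_snd) w_cond //.
rewrite -(integral_invariant_law bB measurable_pair_w).
by apply: eq_integral => o _; rewrite dualpair_trmx.
Qed.

End invariant_law.

Theorem proposition3p3
  (R : realType) (d : nat)
  (X : set 'cV[R]_d) (Y : set R)
  (G : topologicalType) (mul : G -> G -> G) (inv : G -> G) (e : G)
  (rho : G -> 'M[R]_d)
  (dO : measure_display) (O : measurableType dO) (P : probability O R)
  (x : O -> 'cV[R]_d) (y : O -> R) (wstar : 'cV[R]_d) :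
  spans X ->
  compact_group mul inv e ->
  representation mul e rho ->
  (forall g v, X v -> X (rho g *m v)) ->
  (* (x, y) is a random element of X x Y with joint law the distribution P *)
  (forall o, X (x o) /\ Y (y o)) ->
  (forall C : set ('cV[R]_d * R), borel C ->
     measurable ((fun o => (x o, y o)) @^-1` C)) ->
  (forall A : set 'cV[R]_d, borel A -> measurable (x @^-1` A)) ->
  measurable_fun [set: O] y ->
  P.-integrable [set: O] (fun o => (y o)%:E) ->
  (* invariance of the distribution: (rho_g x, y) has the same law as (x, y) *)
  (forall (g : G) (C : set ('cV[R]_d * R)), borel C ->
     P ((fun o => (rho g *m x o, y o)) @^-1` C) =
     P ((fun o => (x o, y o)) @^-1` C)) ->
  (* E[y | x] = <wstar, x>, with wstar unique *)
  cond_exp_linear P x y wstar ->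
  (forall w, cond_exp_linear P x y w -> w = wstar) ->
  (forall g : G, dual_rep inv rho g *m wstar = wstar) /\
  (forall (g : G) (v : 'cV[R]_d), dualpair wstar (rho g *m v) = dualpair wstar v).
Proof.
move=> _ _ [rho_unit _ _ _] _ _ mxy _ _ _ law_rho wstar_cond wstar_uniq.
have rhoT_wstar g : (rho g)^T *m wstar = wstar.
  by apply/wstar_uniq/(cond_exp_linear_trmx (rho_unit g) mxy (law_rho g)).
split => [g | g v]; first exact: rhoT_wstar.
by rewrite -[in RHS](rhoT_wstar g) dualpair_trmx.
Qed.
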